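(* Let $S$ be an $E$-unitary inverse semigroup, $\theta=(\{X_s\}_{s\in S},\{\theta_s\}_{s\in S})$ a topological partial action of $S$ on a topological space $X$, and $\widetilde\theta=(\{X_\gamma\}_{\gamma\in\mathbf{G}(S)},\{\widetilde\theta_\gamma\}_{\gamma\in\mathbf{G}(S)})$ the unique partial action of $\mathbf{G}(S)$ on $X$ with $X_\gamma=\bigcup_{[s]=\gamma}X_s$ and $\widetilde\theta_{[s]}(x)=\theta_s(x)$ for all $s\in S$, $x\in X_{s^*}$. Then $\theta$ is topologically principal if and only if $\widetilde\theta$ is topologically principal.
   Context: Inverse semigroups: $E(S)$ idempotents, $s\le t$ iff $s=ts^*s$; $S$ is $E$-unitary if $e\le s$ with $e\in E(S)$ implies $s\in E(S)$. $\mathbf{G}(S)=S/\!\sim$, $s\sim t$ iff some $u$ has $u\le s,t$; $[s]$ the class of $s$. A topological partial action of an inverse semigroup (in particular of a group) on $X$: open $X_s$, homeomorphisms $\theta_s:X_{s^*}\to X_s$ with $s\mapsto\theta_s$ a partial homomorphism into the inverse semigroup of partial bijections of $X$, and $X=\bigcup_{e\in E(S)}X_e$. With $S_x=\{s:x\in X_{s^*}\}$, $\Lambda(\theta)$ is the set of $x$ such that every $s\in S_x$ with $\theta_s(x)=x$ admits $e\in E(S)\cap S_x$, $e\le s$; topologically principal means $\Lambda(\theta)$ dense in $X$. For a group the only idempotent is the identity, so this says $\theta_g(x)=x$ forces $g=1$. *)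

From HB Require Import structures.
From mathcomp Require Import all_boot.
From mathcomp Require Import boolp classical_sets topology.
From Stdlib Require Import ClassicalEpsilon.

Set Implicit Arguments.
Unset Strict Implicit.
Unset Printing Implicit Defensive.
Local Open Scope classical_set_scope.

Record isg := ISG { isg_car :> Type; smul : isg_car -> isg_car -> isg_car;
                    sstar : isg_car -> isg_car }.

Section InvSemigroup.
Variable S : isg.

Definition idem (e : S) : Prop := smul e e = e.

(* S is an inverse semigroup with s^* the inverse of s: associativity,
   regularity via s^*, and commuting idempotents (the standard
   characterisation; then s^* is the unique inverse of s). *)
Definition is_inverse_semigroup : Prop :=
  (forall a b c : S, smul a (smul b c) = smul (smul a b) c) /\
  (forall s : S, smul (smul s (sstar s)) s = s) /\
  (forall s : S, smul (smul (sstar s) s) (sstar s) = sstar s) /\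
  (forall e f : S, idem e -> idem f -> smul e f = smul f e).

Definition sleq (s t : S) : Prop := s = smul t (smul (sstar s) s).

Definition E_unitary : Prop :=
  forall e s : S, idem e -> sleq e s -> idem s.

Definition ssim (s t : S) : Prop := exists u, sleq u s /\ sleq u t.

End InvSemigroup.

Section MaxGroupImage.
Variable S : isg.

Definition GS_car := {A : set S | exists s : S, A = ssim s}.

Definition cls (s : S) : GS_car := exist _ (ssim s) (ex_intro _ s erefl).

Definition rep (A : GS_car) : S :=
  proj1_sig (constructive_indefinite_description _ (proj2_sig A)).

Definition GS : isg :=
  @ISG GS_car (fun A B => cls (smul (rep A) (rep B))) (fun A => cls (sstar (rep A))).

End MaxGroupImage.

(* A (candidate) partial action of S on X: domains X_s and maps theta_s,
   theta_s being meaningful on X_{s^*}. *)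
Record partial_action (S : isg) (X : topologicalType) := PA {
  pdom : S -> set X;
  pact : S -> X -> X }.

Section PartialAction.
Variables (S : isg) (X : topologicalType) (th : partial_action S X).

Local Notation Xd := (pdom th).
Local Notation t := (pact th).

(* Topological partial action:
   - each X_s is open;
   - theta_s : X_{s^*} -> X_s is a homeomorphism with inverse theta_{s^*};
   - s |-> theta_s is a partial homomorphism into I(X):
       theta_{s^*} = theta_s^{-1} and theta_s o theta_t <= theta_{st};
   - X = U_{e in E(S)} X_e. *)
Definition is_top_partial_action : Prop :=
  (forall s, open (Xd s)) /\
  (forall s x, Xd (sstar s) x -> Xd s (t s x)) /\
  (forall s, {within Xd (sstar s), continuous (t s)}) /\
  (forall s, Xd (sstar (sstar s)) = Xd s) /\
  (forall s x, Xd (sstar s) x -> t (sstar s) (t s x) = x) /\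
  (forall s x, Xd s x -> t s (t (sstar s) x) = x) /\
  (forall s u x, Xd (sstar u) x -> Xd (sstar s) (t u x) ->
       Xd (sstar (smul s u)) x /\ t (smul s u) x = t s (t u x)) /\
  (forall x, exists e, idem e /\ Xd e x).

Definition Lambda : set X :=
  [set x | forall s : S, Xd (sstar s) x -> t s x = x ->
           exists e : S, idem e /\ Xd (sstar e) x /\ sleq e s].

Definition top_principal : Prop := closure Lambda = setT.

End PartialAction.

From HB Require Import structures.
From mathcomp Require Import all_boot.
From mathcomp Require Import boolp classical_sets topology.
Local Open Scope classical_set_scope.
Set Implicit Arguments.
Unset Strict Implicit.

(* Lambda(theta) and Lambda(tilde theta) are in fact equal.  The group G(S)
   has exactly one idempotent, and E-unitarity says that [s] is idempotent only
   if s is.  If theta_s fixes x then so does tilde theta_[s]; conversely, if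
   tilde theta_g fixes x, then x lies in X_{s^*} for some s with [s] = g, and
   theta_s fixes x.  So on either side the condition at a fixed point amounts
   to "[s] is idempotent", i.e. "s is idempotent". *)

Section InverseSemigroup.
Variable S : isg.
Local Notation m := (@smul S).
Local Notation st := (@sstar S).
Hypothesis HS : is_inverse_semigroup S.

Let mulA : forall a b c : S, m a (m b c) = m (m a b) c.
Proof. by case: HS. Qed.
Let regular : forall s : S, m (m s (st s)) s = s.
Proof. by case: HS => _ []. Qed.
Let regular_star : forall s : S, m (m (st s) s) (st s) = st s.
Proof. by case: HS => _ [] _ []. Qed.
Let idem_comm : forall e f : S, idem e -> idem f -> m e f = m f e.
Proof. by case: HS => _ [] _ []. Qed.

Lemma inverse_uniq a x y : m (m a x) a = a -> m (m x a) x = x ->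
  m (m a y) a = a -> m (m y a) y = y -> x = y.
Proof.
move=> axa xax aya yay.
have ixa : idem (m x a) by rewrite /idem mulA xax.
have iya : idem (m y a) by rewrite /idem mulA yay.
have iax : idem (m a x) by rewrite /idem mulA axa.
have iay : idem (m a y) by rewrite /idem mulA aya.
transitivity (m (m y a) x).
  rewrite -{1}xax -{1}aya.
  have -> : m (m x (m (m a y) a)) x = m (m (m x a) (m y a)) x by rewrite !mulA.
  by rewrite (idem_comm ixa iya) -mulA xax.
rewrite -mulA; symmetry.
rewrite -{1}yay -{1}axa.
have -> : m (m y (m (m a x) a)) y = m y (m (m a x) (m a y)) by rewrite !mulA.
by rewrite (idem_comm iax iay) mulA (mulA y a y) yay.
Qed.

Lemma sstarK a : st (st a) = a.
Proof. by apply: (@inverse_uniq (st a)); rewrite ?regular ?regular_star. Qed.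

Lemma idem_starl a : idem (m (st a) a).
Proof. by rewrite /idem mulA regular_star. Qed.

Lemma idem_starr a : idem (m a (st a)).
Proof. by rewrite /idem mulA regular. Qed.

Lemma sstarM a b : st (m a b) = m (st b) (st a).
Proof.
apply: (@inverse_uniq (m a b)); rewrite ?regular ?regular_star //.
- have -> : m (m (m a b) (m (st b) (st a))) (m a b)
     = m (m a (m (m b (st b)) (m (st a) a))) b by rewrite !mulA.
  rewrite (idem_comm (idem_starr b) (idem_starl a)) !mulA regular.
  by rewrite -(mulA a b (st b)) -(mulA a (m b (st b)) b) regular.
- have -> : m (m (m (st b) (st a)) (m a b)) (m (st b) (st a))
     = m (m (st b) (m (m (st a) a) (m b (st b)))) (st a) by rewrite !mulA.
  rewrite (idem_comm (idem_starl a) (idem_starr b)) !mulA regular_star.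
  by rewrite -(mulA (st b) (st a) a) -(mulA (st b) (m (st a) a) (st a)) regular_star.
Qed.

Lemma sstar_idem e : idem e -> st e = e.
Proof. by move=> ie; apply: (@inverse_uniq e); rewrite ?regular ?regular_star ?ie. Qed.

Lemma idem_mul e f : idem e -> idem f -> idem (m e f).
Proof.
move=> ie iff; rewrite /idem.
have -> : m (m e f) (m e f) = m e (m (m f e) f) by rewrite !mulA.
by rewrite -(idem_comm ie iff) -(mulA e f f) iff mulA ie.
Qed.

Lemma idem_conj s e : idem e -> idem (m (m (st s) e) s).
Proof.
move=> ie; rewrite /idem.
have -> : m (m (m (st s) e) s) (m (m (st s) e) s)
   = m (m (st s) (m e (m s (st s)))) (m e s) by rewrite !mulA.
by rewrite (idem_comm ie (idem_starr s)) !mulA regular_star -(mulA (st s) e e) ie.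
Qed.

Lemma sleq_refl (s : S) : sleq s s.
Proof. by rewrite /sleq mulA regular. Qed.

Lemma sleq_mul_idem s e : idem e -> sleq (m s e) s.
Proof.
move=> ie; rewrite /sleq sstarM (sstar_idem ie).
have -> : m (m e (st s)) (m s e) = m (m e (m (st s) s)) e by rewrite !mulA.
by rewrite (idem_comm ie (idem_starl s)) -(mulA (m (st s) s) e e) ie !mulA regular.
Qed.

Lemma ssimE s t : ssim s t <-> exists e, idem e /\ m s e = m t e.
Proof.
split.
- case=> u [us ut]; exists (m (st u) u); split; first exact: idem_starl.
  by rewrite -us -ut.
- case=> e [ie E]; exists (m s e); split; first exact: sleq_mul_idem.
  by rewrite E; apply: sleq_mul_idem.
Qed.

Lemma ssim_refl (s : S) : ssim s s.
Proof. by apply/ssimE; exists (m (st s) s); split; first exact: idem_starl. Qed.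

Lemma ssim_sym (s t : S) : ssim s t -> ssim t s.
Proof. by case=> u [us ut]; exists u. Qed.

Lemma ssim_trans (s t w : S) : ssim s t -> ssim t w -> ssim s w.
Proof.
move=> /ssimE [e [ie E]] /ssimE [f [iff F]]; apply/ssimE.
exists (m e f); split; first exact: idem_mul.
by rewrite mulA E -mulA (idem_comm ie iff) mulA F -mulA.
Qed.

Lemma ssim_mulr (s t w : S) : ssim s t -> ssim (m s w) (m t w).
Proof.
have conj_shift a e : idem e -> m (m a w) (m (m (st w) e) w) = m (m a e) w.
  move=> ie.
  have -> : m (m a w) (m (m (st w) e) w) = m (m a (m (m w (st w)) e)) w
    by rewrite !mulA.
  rewrite (idem_comm (idem_starr w) ie) !mulA -(mulA (m a e) w (st w)).
  by rewrite -(mulA (m a e) (m w (st w)) w) regular.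
move=> /ssimE [e [ie E]]; apply/ssimE.
exists (m (m (st w) e) w); split; first exact: idem_conj.
by rewrite !conj_shift // E.
Qed.

Lemma ssim_mull (s t w : S) : ssim s t -> ssim (m w s) (m w t).
Proof.
by move=> /ssimE [e [ie E]]; apply/ssimE; exists e; split => //; rewrite -!mulA E.
Qed.

Lemma ssim_star (s t : S) : ssim s t -> ssim (st s) (st t).
Proof.
move=> /ssimE [e [ie E]]; apply/ssimE; exists (m (m s e) (st s)); split.
  by have := idem_conj (st s) ie; rewrite sstarK.
have Est : m e (st s) = m e (st t) by rewrite -(sstar_idem ie) -!sstarM E.
have absorb a : m (m a e) (st a) = m (m a e) (m e (st a)).
  by rewrite mulA -(mulA a e e) ie.
have collapse a : m (st a) (m (m a e) (st a)) = m e (st a).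
  rewrite !mulA (idem_comm (idem_starl a) ie).
  by rewrite -(mulA e (m (st a) a) (st a)) regular_star.
have Ef : m (m s e) (st s) = m (m t e) (st t) by rewrite absorb E Est -absorb.
by rewrite collapse Ef collapse Est.
Qed.

Lemma ssim_idem (e f : S) : idem e -> idem f -> ssim e f.
Proof.
move=> ie iff; apply/ssimE; exists (m e f); split; first exact: idem_mul.
by rewrite mulA ie (idem_comm ie iff) mulA iff.
Qed.

Lemma cls_eq (s t : S) : cls s = cls t <-> ssim s t.
Proof.
split.
- by move/(congr1 (@proj1_sig _ _)) => /= ->; apply: ssim_refl.
- move=> sim_st; apply: eq_exist; apply: funext => u; apply: propext.
  by split; [apply: ssim_trans (ssim_sym sim_st) | apply: ssim_trans sim_st].
Qed.

Lemma cls_rep (g : GS S) : cls (rep g) = g.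
Proof.
case: g => A HA; rewrite /rep /=.
case: ClassicalEpsilon.constructive_indefinite_description => s /= As.
by apply: eq_exist; rewrite As.
Qed.

Lemma cls_surj (g : GS S) : exists a, g = cls a.
Proof. by exists (rep g); rewrite cls_rep. Qed.

Lemma rep_cls (s : S) : ssim (rep (cls s)) s.
Proof. by apply/cls_eq; rewrite cls_rep. Qed.

Lemma cls_mul (a b : S) : smul (cls a : GS S) (cls b) = cls (m a b).
Proof.
apply/cls_eq => /=.
exact: ssim_trans (ssim_mulr (rep (cls b)) (rep_cls a)) (ssim_mull a (rep_cls b)).
Qed.

Lemma cls_star (a : S) : sstar (cls a : GS S) = cls (st a).
Proof. by apply/cls_eq; exact: ssim_star (rep_cls a). Qed.

Lemma idem_cls (e : S) : idem e -> idem (cls e : GS S).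
Proof. by rewrite /idem cls_mul => ->. Qed.

Lemma cls_idem_ssim (a : S) : idem (cls a : GS S) -> ssim a (m (st a) a).
Proof.
rewrite /idem cls_mul => /cls_eq aa_a.
have aaa_a : ssim (m (m (st a) a) a) a.
  by have := ssim_mulr a (ssim_idem (idem_starl a) (idem_starr a)); rewrite regular.
apply: ssim_trans (ssim_sym aaa_a) _.
by rewrite -mulA; apply: ssim_mull.
Qed.

Lemma GS_idem_uniq (g h : GS S) : idem g -> idem h -> g = h.
Proof.
have [a ->] := cls_surj g; have [b ->] := cls_surj h.
move=> /cls_idem_ssim ia /cls_idem_ssim ib; apply/cls_eq.
apply: ssim_trans ia (ssim_trans _ (ssim_sym ib)).
exact: ssim_idem (idem_starl a) (idem_starl b).
Qed.

Lemma GS_inverse_semigroup : is_inverse_semigroup (GS S).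
Proof.
split; [|split; [|split]].
- move=> g h k; have [a ->] := cls_surj g; have [b ->] := cls_surj h.
  by have [c ->] := cls_surj k; rewrite !cls_mul mulA.
- by move=> g; have [a ->] := cls_surj g; rewrite cls_star !cls_mul regular.
- by move=> g; have [a ->] := cls_surj g; rewrite cls_star !cls_mul regular_star.
- by move=> e f ie iff; rewrite (GS_idem_uniq ie iff).
Qed.

End InverseSemigroup.

Lemma GS_E_unitary (S : isg) : is_inverse_semigroup S -> E_unitary (GS S).
Proof.
move=> HS e t ie et.
have HG := GS_inverse_semigroup HS; have [mulA [regular _]] := HG.
have ee : smul (sstar e) e = e by apply: (GS_idem_uniq HS) => //; exact: idem_starl HG e.
have tt : smul (sstar t) t = e by apply: (GS_idem_uniq HS) => //; exact: idem_starl HG t.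
by rewrite /sleq ee -{2}tt mulA regular in et; rewrite -et.
Qed.

Lemma E_unitary_cls_idem (S : isg) : is_inverse_semigroup S -> E_unitary S ->
  forall s : S, idem (cls s : GS S) -> idem s.
Proof.
move=> HS EU s /(cls_idem_ssim HS) /(ssimE HS) [f [iff sf]].
apply: (EU (smul s f)); last exact: sleq_mul_idem.
by rewrite sf; apply: idem_mul => //; apply: idem_starl.
Qed.

Section Lambda.
Variables (S : isg) (X : topologicalType).
Variables (th : partial_action S X) (tht : partial_action (GS S) X).
Hypothesis HS : is_inverse_semigroup S.
Hypothesis EU : E_unitary S.
Hypothesis dom_tht :
  forall g : GS S, pdom tht g = [set x | exists s : S, cls s = g /\ pdom th s x].
Hypothesis act_tht :
  forall (s : S) (x : X), pdom th (sstar s) x -> pact tht (cls s) x = pact th s x.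

Lemma Lambda_sub_lift : Lambda th `<=` Lambda tht.
Proof.
move=> x Lx g; rewrite dom_tht => -[s [sg xs]] fix_g.
have s_g : cls (sstar s) = g.
  by rewrite -(cls_star HS) sg (sstarK (GS_inverse_semigroup HS)).
have xs' : pdom th (sstar (sstar s)) x by rewrite sstarK.
have fix_s : pact th (sstar s) x = x by rewrite -act_tht // s_g.
have [e [ie [_ es]]] := Lx _ xs' fix_s.
exists g; split; last split.
- by rewrite -s_g; apply: idem_cls => //; exact: EU ie es.
- by rewrite dom_tht; exists s.
- exact: sleq_refl (GS_inverse_semigroup HS) g.
Qed.

Lemma Lambda_lift_sub : Lambda tht `<=` Lambda th.
Proof.
move=> x Lx s xs fix_s.
have xs' : pdom tht (sstar (cls s : GS S)) x.
  by rewrite (cls_star HS) dom_tht; exists (sstar s).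
have [g [ig [_ gs]]] := Lx _ xs' (etrans (act_tht xs) fix_s).
have idem_s : idem s := E_unitary_cls_idem HS EU (GS_E_unitary HS ig gs).
by exists s; split; last split; last exact: sleq_refl.
Qed.

End Lambda.

Theorem proposition7p10 (S : isg) (X : topologicalType)
  (th : partial_action S X) (tht : partial_action (GS S) X) :
  is_inverse_semigroup S ->
  E_unitary S ->
  is_top_partial_action th ->
  is_top_partial_action tht ->
  (forall g : GS S, pdom tht g = [set x | exists s : S, cls s = g /\ pdom th s x]) ->
  (forall (s : S) (x : X), pdom th (sstar s) x -> pact tht (cls s) x = pact th s x) ->
  (top_principal th <-> top_principal tht).
Proof.
move=> HS EU _ _ dom_tht act_tht.
suff Lambda_eq : Lambda th = Lambda tht by rewrite /top_principal Lambda_eq.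
by apply/seteqP; split; [apply: Lambda_sub_lift | apply: Lambda_lift_sub].
Qed.
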